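(* Consider a system of $M$ conservation laws with state space $\mathcal D\subset\mathbb R^M$, entropy variables $\mathbf v=(v^1,\dots,v^M)$, entropy flux potential $\Psi$, and an entropy conservative two-point flux $\mathbf f^{\mathrm{EC}}$, i.e. $(\mathbf v(\mathbf u_R)-\mathbf v(\mathbf u_L))^T\mathbf f^{\mathrm{EC}}(\mathbf u_L,\mathbf u_R)=\Psi(\mathbf u_R)-\Psi(\mathbf u_L)$ for all $\mathbf u_L,\mathbf u_R\in\mathcal D$. Let an element $R$ with $N_R+1$ interface nodes, diagonal positive weight matrix $\mathbf M_R$ and edge length $\Delta_R>0$ share its edge with $E\ge1$ elements $L_1,\dots,L_E$ ($L_i$ with $N_{L_i}+1$ interface nodes, diagonal positive weight matrix $\mathbf M_{L_i}$, edge length $\Delta_{L_i}>0$, $\sum_i\Delta_{L_i}=\Delta_R$), and let $\mathbf P_{L_i2R}\in\mathbb R^{(N_R+1)\times(N_{L_i}+1)}$, $\mathbf P_{R2L_i}\in\mathbb R^{(N_{L_i}+1)\times(N_R+1)}$ satisfy $$\Delta_{L_i}\mathbf P_{R2L_i}^T\mathbf M_{L_i}=\Delta_R\mathbf M_R\mathbf P_{L_i2R},\qquad \mathbf P_{R2L_i}\mathbf 1^R=\mathbf 1^{L_i}\quad(i=1,\dots,E),\qquad \sum_{i=1}^E\mathbf P_{L_i2R}\mathbf 1^{L_i}=\mathbf 1^R.$$ For arbitrary states $\mathbf U^{L_i}_k,\mathbf U^R_j\in\mathcal D$ let $[\mathbf F^q_{L_i,R}]_{kj}=f^{\mathrm{EC},q}(\mathbf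 U^{L_i}_k,\mathbf U^R_j)$, $\mathbf F^{\mathrm{EC},q,R}=\sum_{i=1}^E\mathbb E(\mathbf P_{L_i2R}\mathbf F^q_{L_i,R})$, $\mathbf F^{\mathrm{EC},q,L_i}=\mathbb E(\mathbf P_{R2L_i}(\mathbf F^q_{L_i,R})^T)$, $V^{q,L_i}_k=v^q(\mathbf U^{L_i}_k)$, $V^{q,R}_j=v^q(\mathbf U^R_j)$, $\Psi^{L_i}_k=\Psi(\mathbf U^{L_i}_k)$, $\Psi^R_j=\Psi(\mathbf U^R_j)$. For a scalar $\lambda>0$ define the numerical surface fluxes $$\mathbf F^{\mathrm{ES},q,L_i}=\mathbf F^{\mathrm{EC},q,L_i}-\frac{\lambda}{2}\big(\mathbf P_{R2L_i}\mathbf V^{q,R}-\mathbf V^{q,L_i}\big),\qquad \mathbf F^{\mathrm{ES},q,R}=\mathbf F^{\mathrm{EC},q,R}-\frac{\lambda}{2}\sum_{i=1}^E\mathbf P_{L_i2R}\big(\mathbf P_{R2L_i}\mathbf V^{q,R}-\mathbf V^{q,L_i}\big).$$ Then the scheme is primary conservative and entropy stable at this interface: for every $q=1,\dots,M$, $$\Delta U^q:=\Delta_R(\mathbf 1^R)^T\mathbf M_R\mathbf F^{\mathrm{ES},q,R}-\sum_{i=1}^E\Delta_{L_i}(\mathbf 1^{L_i})^T\mathbf M_{L_i}\mathbf F^{\mathrm{ES},q,L_i}=0,$$ and $$\Delta S:=\Delta_R\Big(\sum_{q=1}^M(\mathbf V^{q,R})^T\mathbf M_R\mathbf F^{\mathrm{ES},q,R}-(\mathbf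 1^R)^T\mathbf M_R\boldsymbol\Psi^R\Big)-\sum_{i=1}^E\Delta_{L_i}\Big(\sum_{q=1}^M(\mathbf V^{q,L_i})^T\mathbf M_{L_i}\mathbf F^{\mathrm{ES},q,L_i}-(\mathbf 1^{L_i})^T\mathbf M_{L_i}\boldsymbol\Psi^{L_i}\Big)\le0.$$
   Context: Setting: a nodal discontinuous Galerkin spectral element method on Legendre–Gauss–Lobatto nodes (summation-by-parts operators) on a rectangular $h/p$ non-conforming mesh; a hyperbolic system with strongly convex entropy $S$, entropy variables $\mathbf v=\partial S/\partial\mathbf u$, entropy flux $F$, and entropy flux potential $\Psi=\mathbf v\cdot\mathbf f-F$ with $\mathbf f$ the interface-normal flux. One element $R$ is adjacent across one edge to $E$ elements $L_1,\dots,L_E$ stacked along that edge ($E=1$ covers the case of a conforming edge with differing polynomial degrees). $\Delta U^q$ and $\Delta S$ are (up to a common positive factor) the contributions of this interface to the time rate of change of the total integral of the $q$-th conserved variable and of the total entropy when entropy conservative volume fluxes are used; ''primary conservative'' means $\Delta U^q=0$ and ''entropy stable'' means $\Delta S\le 0$. Notation: $\mathbb E(\mathbf W)$ is the vector of diagonal entries of a square matrix $\mathbf W$; $\mathbf 1^R,\mathbf 1^{L_i}$ are all-ones vectors; $\mathbf V^{q,R},\mathbf V^{q,L_i},\boldsymbol\Psi^R,\boldsymbol\Psi^{L_i}$ are the vectors with the indicated entries. *)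

From HB Require Import structures.
From mathcomp Require Import all_boot all_order all_algebra.
Set Implicit Arguments. Unset Strict Implicit. Unset Printing Implicit Defensive.
Import Order.TTheory GRing.Theory Num.Theory.
Local Open Scope ring_scope.

Definition ones (R : pzRingType) (n : nat) : 'cV[R]_n := const_mx 1.
Arguments ones {R n}.

(* E(W): column vector of the diagonal entries of a square matrix W *)
Definition diag_col (R : pzRingType) (n : nat) (W : 'M[R]_n) : 'cV[R]_n :=
  \col_i W i i.

Definition quad (R : pzRingType) (m n : nat) (a : 'cV[R]_m) (W : 'M[R]_(m, n))
  (b : 'cV[R]_n) : R := (a^T *m W *m b) 0 0.

Definition Fmat (R : pzRingType) (M a b : nat)
  (fEC : 'cV[R]_M -> 'cV[R]_M -> 'cV[R]_M) (q : 'I_M)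
  (UL : 'I_a -> 'cV[R]_M) (UR : 'I_b -> 'cV[R]_M) : 'M[R]_(a, b) :=
  \matrix_(k, j) fEC (UL k) (UR j) q 0.

Definition Vvec (R : pzRingType) (M a : nat) (v : 'cV[R]_M -> 'cV[R]_M)
  (q : 'I_M) (U : 'I_a -> 'cV[R]_M) : 'cV[R]_a := \col_k v (U k) q 0.

Definition Psivec (R : pzRingType) (M a : nat) (Psi : 'cV[R]_M -> R)
  (U : 'I_a -> 'cV[R]_M) : 'cV[R]_a := \col_k Psi (U k).

From mathcomp Require Import all_boot all_order all_algebra.
From mathcomp Require Import ring.
Import Order.TTheory GRing.Theory Num.Theory.
Set Implicit Arguments. Unset Strict Implicit. Unset Printing Implicit Defensive.
Local Open Scope ring_scope.

(* The compatibility condition [DL *: (PR2L^T *m ML) = DR *: (MR *m PL2R)] moves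
   every R-side term of a sub-interface to the L side. The entropy conservative
   parts then pair the same matrix against [v^q(U^R_j) f^q_kj] and
   [v^q(U^L_k) f^q_kj]; summed over q their difference is
   [Psi(U^R_j) - Psi(U^L_k)] by the entropy conservation condition, and with
   [PR2L *m 1 = 1] and [\sum_i PL2R i *m 1 = 1] only the Psi boundary terms
   survive. The dissipation term becomes
   [- lambda / 2 * DL * |PR2L V^R - V^L|^2_ML <= 0]. Conservation is the same
   computation with the constant weight 1 in place of V. *)

Definition mxdot (R : pzRingType) (m n : nat) (A B : 'M[R]_(m, n)) : R :=
  \sum_i \sum_j A i j * B i j.

Section QuadraticForms.
Variable R : comPzRingType.

Lemma quadBr m n (a : 'cV[R]_m) (W : 'M_(m, n)) (b c : 'cV_n) :
  quad a W (b - c) = quad a W b - quad a W c.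
Proof. by rewrite /quad mulmxBr [LHS]mxE [X in _ + X]mxE. Qed.

Lemma quadBl m n (a c : 'cV[R]_m) (W : 'M_(m, n)) (b : 'cV_n) :
  quad (a - c) W b = quad a W b - quad c W b.
Proof. by rewrite /quad linearB /= !mulmxBl [LHS]mxE [X in _ + X]mxE. Qed.

Lemma quadZr m n (a : 'cV[R]_m) (W : 'M_(m, n)) k (b : 'cV_n) :
  quad a W (k *: b) = k * quad a W b.
Proof. by rewrite /quad -scalemxAr mxE. Qed.

Lemma quad_sumr m n (a : 'cV[R]_m) (W : 'M_(m, n)) (I : finType)
    (b : I -> 'cV_n) :
  quad a W (\sum_i b i) = \sum_i quad a W (b i).
Proof. by rewrite /quad mulmx_sumr summxE. Qed.

Lemma quad_mulmxr m n p (a : 'cV[R]_m) (A : 'M_(m, n)) (B : 'M_(n, p)) b :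
  quad a (A *m B) b = quad a A (B *m b).
Proof. by rewrite /quad !mulmxA. Qed.

Lemma quad_mulmxl m n p (Q : 'M[R]_(m, n)) a (W : 'M_(m, p)) b :
  quad (Q *m a) W b = quad a (Q^T *m W) b.
Proof. by rewrite /quad trmx_mul !mulmxA. Qed.

Lemma quadE m n (a : 'cV[R]_m) (W : 'M_(m, n)) b :
  quad a W b = \sum_j \sum_k a j 0 * W j k * b k 0.
Proof.
rewrite /quad mxE [RHS]exchange_big; apply: eq_bigr => k _.
by rewrite mxE mulr_suml; apply: eq_bigr => j _; rewrite mxE.
Qed.

Lemma quad_diag n (a b : 'cV[R]_n) (W : 'M_n) : is_diag_mx W ->
  quad a W b = \sum_j a j 0 * W j j * b j 0.
Proof.
move=> /is_diag_mxP W_diag; rewrite quadE; apply: eq_bigr => j _.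
rewrite (bigD1 j) //= big1 ?addr0 // => k k_neq_j.
by rewrite W_diag ?mulr0 ?mul0r // eq_sym.
Qed.

Lemma quadC n (a b : 'cV[R]_n) (W : 'M_n) : is_diag_mx W ->
  quad a W b = quad b W a.
Proof. by move=> W_diag; rewrite !quad_diag //; apply: eq_bigr => j _; ring. Qed.

Lemma mxdotZl m n k (A B : 'M[R]_(m, n)) : mxdot (k *: A) B = k * mxdot A B.
Proof.
rewrite /mxdot mulr_sumr; apply: eq_bigr => i _; rewrite mulr_sumr.
by apply: eq_bigr => j _; rewrite mxE mulrA.
Qed.

Lemma mxdot_sumr m n (A : 'M[R]_(m, n)) (I : finType) (B : I -> 'M_(m, n)) :
  mxdot A (\sum_q B q) = \sum_q mxdot A (B q).
Proof.
rewrite /mxdot [RHS]exchange_big; apply: eq_bigr => i _.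
rewrite [RHS]exchange_big.
by apply: eq_bigr => j _; rewrite summxE mulr_sumr.
Qed.

Lemma mxdotBr m n (A B C : 'M[R]_(m, n)) :
  mxdot A (B - C) = mxdot A B - mxdot A C.
Proof.
rewrite /mxdot -sumrB; apply: eq_bigr => i _; rewrite -sumrB.
by apply: eq_bigr => j _; rewrite !mxE mulrBr.
Qed.

Lemma mxdot_outer m n (A : 'M[R]_(m, n)) (b : 'cV_m) (c : 'cV_n) :
  mxdot A (b *m c^T) = quad b A c.
Proof.
rewrite quadE; apply: eq_bigr => j _; apply: eq_bigr => k _.
by rewrite !mxE big_ord1 !mxE; ring.
Qed.

Lemma quad_diag_col n p (W : 'M[R]_n) (a : 'cV_n) (P : 'M_(n, p))
    (F : 'M_(p, n)) : is_diag_mx W ->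
  quad a W (diag_col (P *m F))
  = mxdot (W *m P) (\matrix_(j, k) (a j 0 * F k j)).
Proof.
move=> /diag_mxP[d ->]; rewrite quad_diag ?diag_mx_is_diag // mul_diag_mx.
apply: eq_bigr => j _; rewrite !mxE eqxx mulr1n mulr_sumr.
by apply: eq_bigr => k _; rewrite !mxE; ring.
Qed.

Lemma quad_diag_col_tr n p (W : 'M[R]_n) (c : 'cV_n) (Q : 'M_(n, p))
    (F : 'M_(n, p)) : is_diag_mx W ->
  quad c W (diag_col (Q *m F^T))
  = mxdot (Q^T *m W) (\matrix_(j, k) (c k 0 * F k j)).
Proof.
move=> /diag_mxP[d ->]; rewrite quad_diag ?diag_mx_is_diag // mul_mx_diag.
rewrite /mxdot exchange_big; apply: eq_bigr => k _.
rewrite !mxE eqxx mulr1n mulr_sumr; apply: eq_bigr => j _; rewrite !mxE; ring.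
Qed.

Lemma trmx_mul_colE n (a b : 'cV[R]_n) :
  (a^T *m b) 0 0 = \sum_q a q 0 * b q 0.
Proof. by rewrite mxE; apply: eq_bigr => q _; rewrite mxE. Qed.

End QuadraticForms.

Lemma quad_ge0 (R : realDomainType) n (a : 'cV[R]_n) (W : 'M_n) :
  is_diag_mx W -> (forall j, 0 < W j j) -> 0 <= quad a W a.
Proof.
move=> W_diag W_pos; rewrite quad_diag //; apply: sumr_ge0 => j _.
by rewrite mulrAC -expr2 mulr_ge0 ?sqr_ge0 ?ltW.
Qed.

Section Interface.
Variables (R : realDomainType) (nR nL : nat) (MR : 'M[R]_nR) (ML : 'M[R]_nL).
Variables (DR DL : R) (P : 'M[R]_(nR, nL)) (Q : 'M[R]_(nL, nR)).
Hypothesis PQ_compat : DL *: (Q^T *m ML) = DR *: (MR *m P).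

Lemma mxdot_transfer G : DR * mxdot (MR *m P) G = DL * mxdot (Q^T *m ML) G.
Proof. by rewrite -!mxdotZl PQ_compat. Qed.

Lemma quad_transfer a b : DR * quad a MR (P *m b) = DL * quad (Q *m a) ML b.
Proof. by rewrite -quad_mulmxr quad_mulmxl -!mxdot_outer mxdot_transfer. Qed.

Hypotheses (MR_diag : is_diag_mx MR) (ML_diag : is_diag_mx ML).
Hypothesis Q_ones : Q *m ones = ones.

Lemma interface_conservative c (F : 'M_(nL, nR)) x :
  DR * quad ones MR (diag_col (P *m F) - c *: (P *m x)) =
  DL * quad ones ML (diag_col (Q *m F^T) - c *: x).
Proof.
rewrite !quadBr !quadZr !mulrBr mulrCA [DL * (c * _)]mulrCA quad_transfer Q_ones.
rewrite quad_diag_col // quad_diag_col_tr // mxdot_transfer.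
by congr (_ * mxdot _ _ - _); apply/matrixP => j k; rewrite !mxE.
Qed.

Variables (I : finType) (VR : I -> 'cV[R]_nR) (VL : I -> 'cV[R]_nL).
Variables (F : I -> 'M[R]_(nL, nR)) (psiR : 'cV[R]_nR) (psiL : 'cV[R]_nL).
Hypothesis flux_potential :
  forall j k, \sum_q (VR q j 0 - VL q k 0) * F q k j = psiR j 0 - psiL k 0.

Lemma ec_entropy_balance :
  \sum_q (DR * quad (VR q) MR (diag_col (P *m F q))
          - DL * quad (VL q) ML (diag_col (Q *m (F q)^T)))
  = DR * quad psiR MR (P *m ones) - DL * quad ones ML psiL.
Proof.
under eq_bigr do
  rewrite quad_diag_col // quad_diag_col_tr // mxdot_transfer -mulrBr -mxdotBr.
rewrite -mulr_sumr -mxdot_sumr.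
have -> : \sum_q (\matrix_(j, k) (VR q j 0 * F q k j)
                  - \matrix_(j, k) (VL q k 0 * F q k j))
          = psiR *m ones^T - ones *m psiL^T.
  apply/matrixP => j k; rewrite summxE; under eq_bigr do rewrite !mxE.
  rewrite !mxE !big_ord1 !mxE mulr1 mul1r -flux_potential.
  by apply: eq_bigr => q _; rewrite mulrBl.
by rewrite mxdotBr !mxdot_outer mulrBr -!quad_mulmxl -quad_transfer Q_ones.
Qed.

Local Notation jump q := (Q *m VR q - VL q).

Lemma interface_entropy_balance c :
  \sum_q DR * quad (VR q) MR (diag_col (P *m F q) - c *: (P *m jump q))
  - DR * quad psiR MR (P *m ones)
  - DL * (\sum_q quad (VL q) ML (diag_col (Q *m (F q)^T) - c *: jump q)
          - quad ones ML psiL)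
  = - (c * \sum_q DL * quad (jump q) ML (jump q)).
Proof.
have rearrange (x y z t : R) : x - y - (z - t) = x - z - (y - t) by ring.
rewrite mulrBr [DL * _]mulr_sumr rearrange -sumrB -ec_entropy_balance -sumrB.
rewrite mulr_sumr -sumrN; apply: eq_bigr => q _.
rewrite [quad (jump q) _ _]quadBl; move: (jump q) => x.
by rewrite !quadBr !quadZr !mulrBr [DR * (c * _)]mulrCA quad_transfer; ring.
Qed.

Lemma interface_entropy_stable c : 0 <= c -> 0 < DL -> (forall k, 0 < ML k k) ->
  \sum_q DR * quad (VR q) MR (diag_col (P *m F q) - c *: (P *m jump q))
  - DR * quad psiR MR (P *m ones)
  - DL * (\sum_q quad (VL q) ML (diag_col (Q *m (F q)^T) - c *: jump q)
          - quad ones ML psiL) <= 0.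
Proof.
move=> c_ge0 DL_gt0 ML_pos; rewrite interface_entropy_balance oppr_le0.
apply: mulr_ge0 c_ge0 _; apply: sumr_ge0 => q _.
by apply: mulr_ge0; [exact: ltW | exact: quad_ge0].
Qed.

End Interface.

Theorem theorem2 (R : realFieldType) (M : nat) (D : 'cV[R]_M -> Prop)
  (v : 'cV[R]_M -> 'cV[R]_M) (Psi : 'cV[R]_M -> R)
  (fEC : 'cV[R]_M -> 'cV[R]_M -> 'cV[R]_M)
  (hEC : forall uL uR, D uL -> D uR ->
     (v uR - v uL)^T *m fEC uL uR = (Psi uR - Psi uL)%:M)
  (E : nat) (hE : (0 < E)%N)
  (NR : nat) (MR : 'M[R]_NR.+1) (DR : R)
  (NL : 'I_E -> nat) (ML : forall i, 'M[R]_((NL i).+1)) (DL : 'I_E -> R)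
  (hMRd : is_diag_mx MR) (hMRp : forall j, 0 < MR j j)
  (hMLd : forall i, is_diag_mx (ML i)) (hMLp : forall i k, 0 < ML i k k)
  (hDR : 0 < DR) (hDL : forall i, 0 < DL i) (hsum : \sum_i DL i = DR)
  (PL2R : forall i, 'M[R]_(NR.+1, (NL i).+1))
  (PR2L : forall i, 'M[R]_((NL i).+1, NR.+1))
  (hP : forall i, DL i *: ((PR2L i)^T *m ML i) = DR *: (MR *m PL2R i))
  (hPR2L1 : forall i, PR2L i *m ones = ones)
  (hPL2R1 : \sum_i PL2R i *m ones = ones)
  (UL : forall i, 'I_(NL i).+1 -> 'cV[R]_M) (UR : 'I_NR.+1 -> 'cV[R]_M)
  (hUL : forall i k, D (UL i k)) (hUR : forall j, D (UR j))
  (lambda : R) (hlam : 0 < lambda) :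
  let F q i := Fmat fEC q (UL i) UR in
  let VR q := Vvec v q UR in
  let VL q i := Vvec v q (UL i) in
  let FESL q i := diag_col (PR2L i *m (F q i)^T)
                  - (lambda / 2) *: (PR2L i *m VR q - VL q i) in
  let FESR q := \sum_i diag_col (PL2R i *m F q i)
                - (lambda / 2) *: \sum_i PL2R i *m (PR2L i *m VR q - VL q i) in
  (forall q, DR * quad ones MR (FESR q)
             - \sum_i DL i * quad ones (ML i) (FESL q i) = 0) /\
  DR * (\sum_q quad (VR q) MR (FESR q) - quad ones MR (Psivec Psi UR))
  - \sum_i DL i * (\sum_q quad (VL q i) (ML i) (FESL q i)
                   - quad ones (ML i) (Psivec Psi (UL i))) <= 0.
Proof.
move=> F VR VL FESL FESR.
have FESR_sum q : FESR q = \sum_i (diag_col (PL2R i *m F q i)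
                    - (lambda / 2) *: (PL2R i *m (PR2L i *m VR q - VL q i))).
  by rewrite /FESR scaler_sumr -sumrB.
split=> [q|].
  rewrite FESR_sum quad_sumr mulr_sumr -sumrB big1 // => i _.
  by rewrite (interface_conservative (hP i)) ?subrr.
have flux_potential i j k : \sum_q (VR q j 0 - VL q i k 0) * F q i k j
                            = Psivec Psi UR j 0 - Psivec Psi (UL i) k 0.
  have := congr1 (fun X : 'M_1 => X 0 0) (hEC _ _ (hUL i k) (hUR j)).
  rewrite /= trmx_mul_colE !mxE eqxx mulr1n => <-.
  by apply: eq_bigr => q _; rewrite !mxE.
have psi_sum : DR * quad ones MR (Psivec Psi UR)
               = \sum_i DR * quad (Psivec Psi UR) MR (PL2R i *m ones).
  by rewrite quadC // -hPL2R1 quad_sumr mulr_sumr.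
rewrite mulrBr psi_sum [DR * _]mulr_sumr.
under eq_bigr do rewrite FESR_sum quad_sumr mulr_sumr.
rewrite exchange_big -!sumrB /=; apply: sumr_le0 => i _.
apply: (interface_entropy_stable (hP i) hMRd (hMLd i) (hPR2L1 i)
          (flux_potential i) _ (hDL i) (hMLp i)).
by rewrite divr_ge0 ?ltW.
Qed.
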